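(* Let $0<c_1\le c_2$ be constants, let $n$ be sufficiently large, let $t\in[1,n^{0.1}]$, and let $H$ be an undirected graph on $n$ vertices in which every vertex has degree between $c_1t$ and $c_2t$ and which has no cycle of length at most $8$. For every constant $\delta>0$ there is a constant $K$ (depending only on $\delta,c_1,c_2$) such that every nonempty vertex set $C$ with $H^2[C]$ of density at least $\delta$ satisfies $|C|\le Kt$.
   Context: $H^2$ (the square of $H$) is the graph on the vertex set of $H$ in which $u\neq v$ are adjacent if and only if there is a path of length exactly $2$ between $u$ and $v$ in $H$. For a graph with $n'\ge 2$ vertices and $m'$ edges its density is $m'/\binom{n'}{2}$; a one-vertex graph has density $1$. *)

From HB Require Import structures.
From mathcomp Require Import all_boot all_order all_algebra.
From mathcomp Require Import reals exp.
Set Implicit Arguments. Unset Strict Implicit. Unset Printing Implicit Defensive.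
Import Order.TTheory GRing.Theory Num.Theory.
Local Open Scope ring_scope.

Definition simple_graph (T : finType) (e : rel T) : Prop :=
  symmetric e /\ irreflexive e.

Definition deg (T : finType) (e : rel T) (x : T) : nat := #|[set y | e x y]|.

Definition no_short_cycle (T : finType) (e : rel T) (k : nat) : Prop :=
  forall s : seq T, uniq s -> (3 <= size s)%N -> (size s <= k)%N -> ~~ cycle e s.

Definition sqrel (T : finType) (e : rel T) : rel T :=
  fun u v => (u != v) && [exists w, e u w && e w v].

Definition induced_edges (T : finType) (g : rel T) (C : {set T}) : nat :=
  #|[set E : {set T} | (E \subset C) &&
       [exists u, exists v, (E == [set u; v]) && g u v]]|.

Definition induced_density (R : realType) (T : finType) (g : rel T) (C : {set T}) : R :=
  if (#|C| <= 1)%N then 1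
  else (induced_edges g C)%:R / ('C(#|C|, 2))%:R.

From HB Require Import structures.
From mathcomp Require Import all_boot all_order all_algebra.
From mathcomp Require Import reals exp.
From mathcomp Require Import zify lra.
Set Implicit Arguments. Unset Strict Implicit. Unset Printing Implicit Defensive.
Import Order.TTheory GRing.Theory Num.Theory.

(* Let N(x) be the set of H^2-neighbours of x inside C, and S the sum of the
   |N(x)| over x in C, which bounds the number of edges of H^2[C]. As H has no
   cycle of length at most 8, a vertex x of N(v) is joined to v through a
   unique middle vertex w, and a vertex y of N(x) reached from x through a
   middle vertex other than w determines x. Hence the |N(x)|, x in N(v), add
   up to at most |C| + D |N(v)|, where D is the maximum degree. Summing over v
   bounds the sum of the |N(x)|^2 by |C|^2 + D S, and Cauchy-Schwarz gives
   S^2 <= |C|^3 (D + 1). Density delta forces delta |C|^2 <= 4 S, hence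
   delta^2 |C| <= 16 (D + 1) <= 16 (1 + c2) t. *)

Section Girth.
Variables (T : finType) (e : rel T).

Fixpoint nonbacktracking (s : seq T) : bool :=
  if s is x :: s' then
    (if s' is _ :: z :: _ then x != z else true) && nonbacktracking s'
  else true.

Lemma no_short_cycle_le k l : k <= l -> no_short_cycle e l -> no_short_cycle e k.
Proof. by move=> kl girth c uc c3 ck; apply: girth => //; exact: leq_trans kl. Qed.

Hypothesis irr_e : irreflexive e.

Lemma nonbacktracking_walk_uniq k x s : no_short_cycle e k -> size s <= k ->
  path e x s -> nonbacktracking (x :: s) -> uniq (x :: s).
Proof.
move=> girth; elim: s x => [//|y s IH] x sz /andP[exy pys] /andP[nbx nbys].
have uys : uniq (y :: s) by apply: IH => //; exact: ltnW.
rewrite cons_uniq uys andbT; apply/negP => xys.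
have [s1 [s2 def_ys]] : exists s1 s2, y :: s = s1 ++ x :: s2.
  by case/splitPr: xys => s1 s2; exists s1, s2.
have pxs : path e x (y :: s) by rewrite /= exy.
move: uys pxs sz; rewrite def_ys cat_uniq cat_path size_cat.
move=> /and3P[us1 /norP[xs1 _] _] /andP[ps1 /andP[ex _]] sz.
case: s1 def_ys us1 xs1 ps1 ex sz => [|a [|b s1]] def_ys us1 xs1 ps1 ex sz.
- by case: def_ys exy => -> _; rewrite irr_e.
- by case: def_ys nbx => _ ->; rewrite eqxx.
- apply: (negP (girth [:: x, a, b & s1] _ _ _)) => //.
  + by rewrite cons_uniq us1 xs1.
  + by apply: leq_trans sz; rewrite /= addnS ltnS leq_addr.
  + by change (path e x (rcons [:: a, b & s1] x)); rewrite rcons_path ps1.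
Qed.

Hypothesis sym_e : symmetric e.

Lemma common_neighbor_unique v w w' x : no_short_cycle e 4 ->
  e v w -> e w x -> e v w' -> e w' x -> v != x -> w = w'.
Proof.
move=> girth vw wx vw' w'x vx; apply/eqP/negPn/negP => ww'.
have := @nonbacktracking_walk_uniq 4 v [:: w; x; w'; v] girth.
rewrite /= vw wx (sym_e x) w'x (sym_e w') vw' vx ww' eq_sym vx mem_seq4 eqxx !orbT.
by move=> /(_ isT isT isT).
Qed.

Lemma two_step_walks_mid_unique v w1 x w2 y w1' x' w2' :
  no_short_cycle e 8 ->
  e v w1 -> e w1 x -> e x w2 -> e w2 y -> w1 != w2 -> v != x -> x != y ->
  e v w1' -> e w1' x' -> e x' w2' -> e w2' y -> w1' != w2' -> v != x' -> x' != y ->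
  x = x'.
Proof.
move=> girth vw1 w1x xw2 w2y w12 vx xy vw1' w1'x' x'w2' w2'y w12' vx' x'y.
apply/eqP/negPn/negP => xx'.
(* y-w2-x-w1-v-w1'-x'-w2'-y, or y-w2-x-w1-x'-w2'-y when w1 = w1', is then a
   non-backtracking closed walk of length at most 8. *)
have [w11'|w11'] := eqVneq w1 w1'.
  subst w1'.
  have := @nonbacktracking_walk_uniq 8 y [:: w2; x; w1; x'; w2'; y] girth.
  rewrite /= (sym_e y) w2y (sym_e w2) xw2 (sym_e x) w1x w1'x' x'w2' w2'y.
  rewrite eq_sym xy eq_sym w12 xx' w12' x'y !inE eqxx !orbT.
  by move=> /(_ isT isT isT).
have := @nonbacktracking_walk_uniq 8 y [:: w2; x; w1; v; w1'; x'; w2'; y] girth.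
rewrite /= (sym_e y) w2y (sym_e w2) xw2 (sym_e x) w1x (sym_e w1) vw1.
rewrite vw1' w1'x' x'w2' w2'y.
rewrite eq_sym xy eq_sym w12 eq_sym vx w11' vx' w12' x'y !inE eqxx !orbT.
by move=> /(_ isT isT isT).
Qed.
End Girth.

Lemma sqrel_sym (T : finType) (e : rel T) : symmetric e -> symmetric (sqrel e).
Proof.
move=> sym_e u v; rewrite /sqrel eq_sym; congr (_ && _).
by apply/existsP/existsP => -[w /andP[uw wv]]; exists w; rewrite sym_e wv sym_e uw.
Qed.

Lemma card_dep_pairs (T : finType) (X : {pred T}) (F : T -> {set T}) :
  #|[set p : T * T | (p.1 \in X) && (p.2 \in F p.1)]| = \sum_(x in X) #|F x|.
Proof.
rewrite -sum1dep_card.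
rewrite -(pair_big_dep (fun x => x \in X) (fun x y => y \in F x) (fun _ _ => 1)) /=.
by apply: eq_bigr => x _; rewrite sum1_card.
Qed.

Lemma induced_edges_le_sum (T : finType) (g : rel T) (C : {set T}) :
  induced_edges g C <= \sum_(x in C) #|[set y in C | g x y]|.
Proof.
rewrite -card_dep_pairs; set P := [set p : T * T | _].
apply: leq_trans (leq_imset_card (fun p : T * T => [set p.1; p.2]) P).
apply: subset_leq_card; apply/subsetP => E.
rewrite inE => /andP[EC /existsP[u /existsP[v /andP[/eqP def_E guv]]]].
subst E; apply/imsetP; exists (u, v) => //.
by rewrite /P !inE /= guv !(subsetP EC) // !inE eqxx ?orbT.
Qed.

Lemma leq_sqr_sum (T : finType) (A : {pred T}) (f : T -> nat) :
  (\sum_(x in A) f x) ^ 2 <= #|A| * \sum_(x in A) f x ^ 2.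
Proof.
rewrite -(@leq_pmul2l 2) //.
have -> : 2 * (\sum_(x in A) f x) ^ 2 = \sum_(x in A) \sum_(y in A) 2 * (f x * f y).
  rewrite -mulnn big_distrl big_distrr /=; apply: eq_bigr => x _.
  by rewrite !big_distrr.
have <- : \sum_(x in A) \sum_(y in A) (f x ^ 2 + f y ^ 2) =
          2 * (#|A| * \sum_(x in A) f x ^ 2).
  under eq_bigr => x _ do rewrite big_split /= sum_nat_const.
  by rewrite big_split /= sum_nat_const -big_distrr /= mul2n -addnn.
by apply: leq_sum => x _; apply: leq_sum => y _; exact: (nat_Cauchy _ _).1.
Qed.

Lemma sqr_le_4bin2 m : 1 < m -> m ^ 2 <= 4 * 'C(m, 2).
Proof. by rewrite bin2; nia. Qed.

Section SquareNeighbourhoods.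
Variables (T : finType) (e : rel T).
Hypotheses (irr_e : irreflexive e) (sym_e : symmetric e) (girth : no_short_cycle e 8).
Variables (C : {set T}) (D : nat).
Hypothesis deg_le : forall w, deg e w <= D.

Let sq_nbhd x := [set y in C | sqrel e x y].
Let back v x := [set y | [exists w, [&& e v w, e w x & e w y]]].

Lemma card_sq_nbhdI_back_le v x :
  x \in sq_nbhd v -> #|sq_nbhd x :&: back v x| <= D.
Proof.
rewrite inE => /andP[_ /andP[vx /existsP[w /andP[vw wx]]]].
apply: leq_trans (deg_le w); apply: subset_leq_card; apply/subsetP => y.
rewrite !inE => /andP[_ /existsP[w' /and3P[vw' w'x w'y]]].
have girth4 : no_short_cycle e 4 by apply: no_short_cycle_le girth.
by rewrite (common_neighbor_unique irr_e sym_e girth4 vw wx vw' w'x vx).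
Qed.

Lemma sq_nbhdD_back_walk v x y :
  x \in sq_nbhd v -> y \in sq_nbhd x :\: back v x ->
  exists w1 w2, [/\ e v w1, e w1 x, e x w2, e w2 y & [/\ w1 != w2, v != x & x != y]].
Proof.
rewrite !inE => /andP[_ /andP[vx /existsP[w1 /andP[vw1 w1x]]]].
move=> /andP[y_back /andP[_ /andP[xy /existsP[w2 /andP[xw2 w2y]]]]].
exists w1, w2; split=> //; split=> //; apply: contraNneq y_back => w12.
by apply/existsP; exists w2; rewrite -w12 vw1 w1x w12.
Qed.

Lemma sum_card_sq_nbhdD_back_le v :
  \sum_(x in sq_nbhd v) #|sq_nbhd x :\: back v x| <= #|C|.
Proof.
rewrite -card_dep_pairs; set P := [set p : T * T | _].
have snd_inj : {in P &, injective snd}.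
  move=> [x y] [x' y'] /[1!inE] /andP[xv yx] /[1!inE] /andP[x'v y'x'] /= def_y'.
  subst y'; congr (_, _).
  have [w1 [w2 [vw1 w1x xw2 w2y [w12 vx xy]]]] := sq_nbhdD_back_walk xv yx.
  have [w1' [w2' [vw1' w1'x' x'w2' w2'y [w12' vx' x'y]]]] := sq_nbhdD_back_walk x'v y'x'.
  exact: (two_step_walks_mid_unique irr_e sym_e girth vw1 w1x xw2 w2y w12 vx xy
                                    vw1' w1'x' x'w2' w2'y w12' vx' x'y).
rewrite -(card_in_imset snd_inj); apply: subset_leq_card; apply/subsetP => y.
by case/imsetP => -[x y'] /=; rewrite !inE => /andP[_ /andP[_ /andP[+ _]]] ->.
Qed.

Lemma sum_over_sq_nbhd_card_le v :
  \sum_(x in sq_nbhd v) #|sq_nbhd x| <= #|C| + D * #|sq_nbhd v|.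
Proof.
rewrite (eq_bigr _ (fun x _ => esym (cardsID (back v x) (sq_nbhd x)))).
rewrite big_split /= addnC.
rewrite leq_add ?sum_card_sq_nbhdD_back_le // mulnC -sum_nat_const.
by apply: leq_sum => x; exact: card_sq_nbhdI_back_le.
Qed.

Lemma sum_sqr_card_sq_nbhd_le :
  \sum_(x in C) #|sq_nbhd x| ^ 2 <= #|C| ^ 2 + D * \sum_(x in C) #|sq_nbhd x|.
Proof.
have -> : \sum_(x in C) #|sq_nbhd x| ^ 2 =
          \sum_(v in C) \sum_(x in sq_nbhd v) #|sq_nbhd x|.
  transitivity (\sum_(x in C) \sum_(v in sq_nbhd x) #|sq_nbhd x|).
    by apply: eq_bigr => x _; rewrite sum_nat_const mulnn.
  rewrite (exchange_big_dep (mem C)) /=; last by move=> x v _; rewrite inE => /andP[].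
  apply: eq_bigr => v vC; apply: eq_bigl => x.
  by rewrite !inE vC (sqrel_sym sym_e).
rewrite -mulnn -sum_nat_const big_distrr -big_split /=.
by apply: leq_sum => v _; exact: sum_over_sq_nbhd_card_le.
Qed.

Lemma sqr_sum_card_sq_nbhd_le :
  (\sum_(x in C) #|sq_nbhd x|) ^ 2 <= #|C| ^ 3 * D.+1.
Proof.
have S_le : \sum_(x in C) #|sq_nbhd x| <= #|C| ^ 2.
  rewrite -mulnn -sum_nat_const; apply: leq_sum => x _.
  by apply: subset_leq_card; apply/subsetP => y; rewrite inE => /andP[].
apply: leq_trans (leq_sqr_sum _ _) _.
apply: leq_trans (leq_mul (leqnn _) sum_sqr_card_sq_nbhd_le) _.
nia.
Qed.

Lemma induced_edges_sqrel_sqr_le :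
  induced_edges (sqrel e) C ^ 2 <= #|C| ^ 3 * D.+1.
Proof.
apply: leq_trans sqr_sum_card_sq_nbhd_le; rewrite leq_exp2r //.
exact: induced_edges_le_sum.
Qed.

End SquareNeighbourhoods.

Local Open Scope ring_scope.

Lemma density_sqr_card_le (R : realType) (T : finType) (g : rel T) (C : {set T})
    (delta : R) :
  0 <= delta -> (1 < #|C|)%N -> delta <= induced_density R g C ->
  delta * #|C|%:R ^+ 2 <= 4 * (induced_edges g C)%:R.
Proof.
move=> delta_ge0 C_gt1; rewrite /induced_density ltn_geF //.
rewrite ler_pdivlMr ?ltr0n ?bin_gt0 // => dens.
have C_le : #|C|%:R ^+ 2 <= 4 * 'C(#|C|, 2)%:R :> R.
  by rewrite -natrX -natrM ler_nat sqr_le_4bin2.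
rewrite (le_trans (ler_wpM2l delta_ge0 C_le)) // mulrCA.
exact: ler_wpM2l.
Qed.

Lemma sqr_density_card_le (R : realType) (T : finType) (g : rel T) (C : {set T})
    (delta : R) (B : nat) :
  0 <= delta -> (1 < #|C|)%N -> delta <= induced_density R g C ->
  (induced_edges g C ^ 2 <= #|C| ^ 3 * B)%N -> delta ^+ 2 * #|C|%:R <= 16 * B%:R.
Proof.
move=> delta_ge0 C_gt1 dens; rewrite -(ler_nat R) natrM !natrX => EmB.
have dmE := density_sqr_card_le delta_ge0 C_gt1 dens.
have m_gt0 : 0 < #|C|%:R :> R by rewrite ltr0n ltnW.
move: #|C|%:R (induced_edges g C)%:R (ler0n R (induced_edges g C)) m_gt0 dmE EmB.
move=> m E E_ge0 m_gt0 dmE EmB.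
have dm_ge0 : 0 <= delta * m ^+ 2 by rewrite mulr_ge0 // exprn_ge0 // ltW.
have sqr_dmE : (delta * m ^+ 2) ^+ 2 <= 16 * (m ^+ 3 * B%:R).
  rewrite expr2 (le_trans (ler_pM dm_ge0 dm_ge0 dmE dmE)) //.
  nra.
rewrite -(ler_pM2r (exprn_gt0 3 m_gt0)).
nra.
Qed.

Theorem lemmaA6 (R : realType) (c1 c2 : R) :
  0 < c1 -> c1 <= c2 ->
  exists N : nat, forall delta : R, 0 < delta ->
  exists K : R, forall (n : nat), (N <= n)%N ->
  forall (t : R), 1 <= t -> t <= powR (n%:R) (10%:R^-1) ->
  forall e : rel 'I_n, simple_graph e ->
  (forall x : 'I_n, c1 * t <= (deg e x)%:R /\ (deg e x)%:R <= c2 * t) ->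
  no_short_cycle e 8 ->
  forall C : {set 'I_n}, C != set0 ->
  delta <= induced_density R (sqrel e) C ->
  (#|C|)%:R <= K * t.
Proof.
move=> c1_gt0 c12; exists 0%N => delta delta_gt0.
have c2_gt0 : 0 < c2 := lt_le_trans c1_gt0 c12.
have d2_gt0 : 0 < delta ^+ 2 := exprn_gt0 2 delta_gt0.
set q := 16 * (1 + c2) / delta ^+ 2.
have q_ge0 : 0 <= q by rewrite /q divr_ge0 ?(ltW d2_gt0) //; lra.
have q_d2 : q * delta ^+ 2 = 16 * (1 + c2) by rewrite /q divfK // gt_eqF.
exists (q + 1) => n _ t t_ge1 _ e [sym_e irr_e] deg_bounds girth C C_neq0 dens.
have [C_le1 | C_gt1] := leqP #|C| 1.
  have : #|C|%:R <= 1 :> R by rewrite lern1.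
  nra.
have n_gt0 : (0 < #|'I_n|)%N.
  by have /set0Pn[x _] := C_neq0; apply/card_gt0P; exists x.
have [w max_deg] := bigop.eq_bigmax (deg e) n_gt0.
have D_le : (\max_v deg e v)%:R <= c2 * t by rewrite max_deg; case: (deg_bounds w).
have := sqr_density_card_le (ltW delta_gt0) C_gt1 dens
  (induced_edges_sqrel_sqr_le irr_e sym_e girth C (@bigop.leq_bigmax _ (deg e))).
rewrite -natr1 => card_le.
rewrite -(ler_pM2l d2_gt0).
have q_d2_t : q * delta ^+ 2 * t = 16 * (1 + c2) * t by rewrite q_d2.
(* delta^2 |C| <= 16 (D + 1) <= 16 (c2 t + 1) <= 16 (1 + c2) t = q delta^2 t *)
nra.
Qed.
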